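(* Let $f:\mathbb{R}^2\times\mathbb{R}\to\mathbb{R}$ be continuously differentiable, and let $(a,b)\in\mathbb{R}^2\times\mathbb{R}$ satisfy $f(a,b)=0$ and $\partial_y f(a,b)\neq 0$. Let $U\subset\mathbb{R}^2$ be a closed rectangle (sides parallel to the coordinate axes) containing $a$ and $V\subset\mathbb{R}$ a closed bounded interval containing $b$, and let $g:U\to V$ be a function such that $f(x,g(x))=0$ for all $x\in U$. Assume that for each $x\in U$ the function $y\mapsto \mathrm{sign}(f(x,y))$ on $V$ is a single-step function, and that the constant $\rho\in\{1,-1\}$ is defined by: $\rho=1$ if these step functions are increasing in $y$, and $\rho=-1$ if they are decreasing (this is the same for all $x\in U$). For a subrectangle $R\subseteq U$ define $$\mu(R)=\int_{R\times V}\Theta(f(x,y))\,dx\,dy,$$ where $\Theta(t)=1$ for $t\ge 0$ and $\Theta(t)=0$ for $t<0$, and $dx\,dy$ is Lebesgue measure. Then for every subrectangle $R$ of $U$, $$\int_R g\,dx=|R|\,(\max V)^{\frac{\rho+1}{2}}(\min V)^{\frac{1-\rho}{2}}-\rho\,\mu(R),$$ where $|R|$ denotes the area of $R$ (and a factor raised to the exponent $0$ is read as $1$).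
   Context: All rectangles are parallel to the coordinate axes. The existence of $U$, $V$ and a unique continuously differentiable $g:U\to V$ with $f(x,g(x))=0$ is provided by the implicit function theorem; $f$ is regarded on $U\times V$. *)

From HB Require Import structures.
From mathcomp Require Import all_boot all_order all_algebra.
From mathcomp Require Import all_classical all_reals all_analysis.
Set Implicit Arguments. Unset Strict Implicit. Unset Printing Implicit Defensive.
Import Order.TTheory GRing.Theory Num.Theory.
Import numFieldNormedType.Exports.
Local Open Scope classical_set_scope.
Local Open Scope ring_scope.

Definition leb2 (R : realType) := ((lebesgue_measure (R:=R)) \x (lebesgue_measure (R:=R)))%E.
Definition leb3 (R : realType) := ((@leb2 R) \x (lebesgue_measure (R:=R)))%E.

Definition rect (R : realType) (r1 r2 r3 r4 : R) : set (R * R) :=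
  `[r1, r2]%classic `*` `[r3, r4]%classic.

Definition Theta (R : realType) (t : R) : R := if 0 <= t then 1 else 0.

Definition sign (R : realType) (t : R) : R := Num.sg t.

Definition single_step_incr (R : realType) (s : R -> R) (c d : R) : Prop :=
  exists t, c <= t <= d /\
    forall y, c <= y <= d -> (y < t -> s y = -1) /\ (t < y -> s y = 1).

Definition single_step_decr (R : realType) (s : R -> R) (c d : R) : Prop :=
  exists t, c <= t <= d /\
    forall y, c <= y <= d -> (y < t -> s y = 1) /\ (t < y -> s y = -1).

(* f : R^2 x R -> R is continuously differentiable: differentiable everywhere
   and all directional derivatives depend continuously on the point
   (equivalent to continuity of the total derivative in finite dimension). *)
Definition C1 (R : realType) (f : (R * R) * R -> R) : Prop :=
  (forall z, differentiable f z) /\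
  (forall v : (R * R) * R, continuous (fun z => 'D_v f z)).

(* For x in the rectangle, f (x, g x) = 0 forces the step of y |-> sign (f (x, y))
   to sit at g x, so {y in [c, d] | f (x, y) >= 0} is [g x, d] when rho = 1 and
   [c, g x] when rho = -1.  Hence mu(R) is the measure of the region between the graph
   of g and a horizontal face of R x [c, d], which by the definition of the product
   measure is the integral over R of d - g, resp. g - c.  The same description of the
   superlevel sets {s < g} as preimages of open sets under the continuous maps
   x |-> f (x, s) makes g measurable, hence integrable on R. *)

From HB Require Import structures.
From mathcomp Require Import all_boot all_order all_algebra.
From mathcomp Require Import all_classical all_reals all_analysis.
From mathcomp Require Import measurable_realfun ring lra.
Set Implicit Arguments. Unset Strict Implicit. Unset Printing Implicit Defensive.
Import Order.TTheory GRing.Theory Num.Theory.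
Import numFieldNormedType.Exports.
Local Open Scope classical_set_scope.
Local Open Scope ring_scope.

Section plane_measure.
Variable R : realType.

Lemma lebesgue_measure_itvcc (p q : R) : p <= q ->
  lebesgue_measure (`[p, q]%classic : set R) = (q - p)%:E.
Proof.
move=> pq; rewrite lebesgue_measure_itv /= lte_fin.
by case: ltgtP pq => // -> _; rewrite subrr.
Qed.

Lemma measurable_rect (r1 r2 r3 r4 : R) : measurable (rect r1 r2 r3 r4).
Proof. by apply: measurableX; exact: measurable_itv. Qed.

Lemma leb2_rect (r1 r2 r3 r4 : R) : r1 <= r2 -> r3 <= r4 ->
  @leb2 R (rect r1 r2 r3 r4) = ((r2 - r1) * (r4 - r3))%:E.
Proof.
move=> r12 r34; rewrite /leb2 product_measure1E; try exact: measurable_itv.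
by rewrite EFinM -(lebesgue_measure_itvcc r12) -(lebesgue_measure_itvcc r34).
Qed.

(* Every open set is a countable union of boxes with rational centres and radii. *)
Lemma open_measurable_pair (A : set (R * R)) : open A -> measurable A.
Proof.
move=> oA.
pose box (q1 q2 r : rat) : set (R * R) :=
  ball (ratr q1 : R) (ratr r) `*` ball (ratr q2 : R) (ratr r).
pose B q1 q2 r := if pselect (box q1 q2 r `<=` A) then box q1 q2 r else set0.
suff -> : A = \bigcup_q1 \bigcup_q2 \bigcup_r B q1 q2 r.
  apply: bigcupT_measurable_rat => q1; apply: bigcupT_measurable_rat => q2.
  apply: bigcupT_measurable_rat => r; rewrite /B.
  case: pselect => boxA; last exact: measurable0.
  by apply: measurableX; rewrite ball_itv; exact: measurable_itv.
apply/seteqP; split => [x Ax|x [q1 _ [q2 _ [r _]]]]; last first.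
  by rewrite /B; case: pselect => // boxA /boxA.
have /nbhs_ballP[e e0 beA] : nbhs x A by move: oA; rewrite openE; exact.
have [r] := rat_in_itvoo (divr_gt0 e0 (ltr0n _ 2)); rewrite in_itv /= => /andP[r0 re].
have near_rat (t : R) : exists q : rat, ball (ratr q : R) (ratr r) t.
  have [|q] := @rat_in_itvoo R (t - ratr r) (t + ratr r); first lra.
  by exists q => //; apply: ball_sym; rewrite ball_itv.
have [q1 bq1] := near_rat x.1; have [q2 bq2] := near_rat x.2.
exists q1 => //; exists q2 => //; exists r => //; rewrite /B.
case: pselect => // -[] y [/= y1 y2]; apply: beA.
have rre : (ratr r : R) + ratr r <= e by lra.
by split; [exact: (le_ball rre (ball_triangle (ball_sym bq1) y1))
          |exact: (le_ball rre (ball_triangle (ball_sym bq2) y2))].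
Qed.

Lemma measurable_fun_open_superlevel (D : set (R * R)) (g : R * R -> R) :
  measurable D ->
  (forall s, exists2 U : set (R * R), open U & D `&` [set x | s < g x] = D `&` U) ->
  measurable_fun D g.
Proof.
move=> mD gU; apply: (measurability _ (RGenOInfty.measurableE R)) => //.
move=> /= _ [_ [s ->] <-]; have [U oU DgU] := gU s.
have -> : g @^-1` `]s, +oo[%classic = [set x | s < g x].
  by apply/seteqP; split => x /=; rewrite in_itv /= andbT.
by rewrite DgU; apply: measurableI => //; exact: open_measurable_pair.
Qed.

End plane_measure.

Section single_step.
Variables (R : realType) (h : R -> R) (c d : R).

Lemma single_step_incr_root (t : R) :
  single_step_incr (fun y => sign (h y)) c d -> c <= t <= d -> h t = 0 ->
  forall y, c <= y <= d -> (h y < 0) = (y < t) /\ (0 < h y) = (t < y).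
Proof.
move=> [t' [_ step]] tcd ht0.
have tt' : t = t'.
  have [lt_t lt_t'] := step t tcd; rewrite /sign ht0 sgr0 in lt_t lt_t'.
  by case: (ltgtP t t') => // [/lt_t|/lt_t'] /eqP; rewrite eq_sym ?oppr_eq0 oner_eq0.
move=> y ycd; have [lt_y lt_y'] := step y ycd; rewrite -{}tt' in lt_y lt_y'.
case: (ltgtP y t) => [yt|ty|->]; last by rewrite ht0 ltxx.
- by move/eqP: (lt_y yt); rewrite sgr_cp0 => hy; rewrite hy (lt_gtF hy).
- by move/eqP: (lt_y' ty); rewrite sgr_cp0 => hy; rewrite hy (lt_gtF hy).
Qed.

Lemma single_step_decr_opp :
  single_step_decr (fun y => sign (h y)) c d ->
  single_step_incr (fun y => sign (- h y)) c d.
Proof.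
move=> [t [tcd step]]; exists t; split => // y /step[lt_y lt_y'].
by rewrite /sign sgrN; split => [/lt_y|/lt_y']; rewrite /sign => ->; rewrite ?opprK.
Qed.

End single_step.

Section region_between_graphs.
Variables (R : realType) (S : set (R * R)) (c d : R) (lo hi : R * R -> R).
Hypotheses (mS : measurable S) (mlo : measurable_fun S lo) (mhi : measurable_fun S hi).
Hypotheses (c_lo : forall x, S x -> c <= lo x) (lo_hi : forall x, S x -> lo x <= hi x)
  (hi_d : forall x, S x -> hi x <= d).

Let D := S `*` `[c, d]%classic.
Let A := [set z : (R * R) * R | lo z.1 <= z.2 <= hi z.1].

Let measurable_DA : measurable (D `&` A).
Proof.
have mD : measurable D by apply: measurableX => //; exact: measurable_itv.
have fstS : fst @` D `<=` S by move=> _ [z [zS _] <-].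
have mfst : measurable_fun D fst by exact: measurable_funS (@measurable_fst _ _ _ _).
have msnd : measurable_fun D snd by exact: measurable_funS (@measurable_snd _ _ _ _).
have mlo' : measurable_fun D (lo \o fst) by exact: measurable_comp mS fstS mlo mfst.
have mhi' : measurable_fun D (hi \o fst) by exact: measurable_comp mS fstS mhi mfst.
exact: (measurable_and (measurable_fun_ler mlo' msnd) (measurable_fun_ler msnd mhi')) mD
  [set true] I.
Qed.

Let xsection_DA x : xsection (D `&` A) x = if x \in S then `[lo x, hi x]%classic else set0.
Proof.
apply/seteqP; split => y; rewrite /xsection /= in_setE.
  case: ifPn => [/set_mem Sx|Sx]; last by move=> [[/= /mem_set xS]]; rewrite xS in Sx.
  by move=> [_ /andP[? ?]]; rewrite /= in_itv /=; apply/andP.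
case: ifPn => [/set_mem Sx|//]; rewrite /= in_itv /= => /andP[lo_y y_hi].
split; last by rewrite /A /= lo_y y_hi.
by split; rewrite //= in_itv /= (le_trans (c_lo Sx) lo_y) (le_trans y_hi (hi_d Sx)).
Qed.

Lemma integral_indic_between :
  (\int[@leb3 R]_(z in D) (\1_A z)%:E
   = \int[@leb2 R]_(x in S) ((hi x)%:E - (lo x)%:E))%E.
Proof.
have mD : measurable D by apply: measurableX => //; exact: measurable_itv.
have -> : (\int[@leb3 R]_(z in D) (\1_A z)%:E
          = \int[@leb3 R]_(z in D) (\1_(D `&` A) z)%:E)%E.
  by apply: eq_integral => z /set_mem Dz; rewrite !indicE in_setI (mem_set Dz).
rewrite integral_indic // (setIidl (@subIsetl _ D A)).
transitivity (\int[@leb2 R]_x (lebesgue_measure (xsection (D `&` A) x)))%E; first by [].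
rewrite [RHS]integral_mkcond; apply: eq_integral => x _.
rewrite xsection_DA /patch; case: ifPn => [/set_mem Sx|_]; last exact: measure0.
by rewrite lebesgue_measure_itvcc ?EFinB ?lo_hi.
Qed.

End region_between_graphs.

Section bounded_integrals.
Variables (d0 : measure_display) (T : measurableType d0) (R : realType).
Variables (mu : {measure set T -> \bar R}) (D : set T) (m : R).
Hypotheses (mD : measurable D) (mu_D : mu D = m%:E).

Lemma integrable_between (h : T -> R) (c d : R) :
  measurable_fun D h -> (forall x, D x -> c <= h x <= d) -> mu.-integrable D (EFin \o h).
Proof.
move=> mh h_cd; apply: measurable_bounded_integrable; rewrite ?mu_D ?ltry //.
apply: filterS (nbhs_pinfty_ge (num_real (`|c| + `|d|))) => M cdM x /h_cd /andP[cx xd].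
apply: le_trans cdM; rewrite ler_norml.
have := ler_norm d; have := lerNnormlW (lexx `|c|); have := normr_ge0 c; have := normr_ge0 d.
lra.
Qed.

Let integrable_cst (k : R) : mu.-integrable D (EFin \o cst k).
Proof.
by apply: (integrable_between (c := k) (d := k) (measurable_cst k)) => x _; rewrite lexx.
Qed.

Lemma integral_cstB_EFin (k : R) (h : T -> R) : mu.-integrable D (EFin \o h) ->
  (\int[mu]_(x in D) (k%:E - (h x)%:E) = (k * m)%:E - \int[mu]_(x in D) (h x)%:E)%E.
Proof.
by move=> hi; rewrite integralB_EFin // ?integral_cst ?mu_D //; exact: integrable_cst.
Qed.

Lemma integral_Bcst_EFin (k : R) (h : T -> R) : mu.-integrable D (EFin \o h) ->
  (\int[mu]_(x in D) ((h x)%:E - k%:E) = \int[mu]_(x in D) (h x)%:E - (k * m)%:E)%E.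
Proof.
by move=> hi; rewrite integralB_EFin // ?integral_cst ?mu_D //; exact: integrable_cst.
Qed.

End bounded_integrals.

Section implicit_function_graph.
Variables (R : realType) (f : (R * R) * R -> R) (g : R * R -> R) (c d : R).
Variable S : set (R * R).
Hypotheses (f_cont : continuous f) (mS : measurable S).
Hypotheses (g_cd : forall x, S x -> c <= g x <= d) (f_g : forall x, S x -> f (x, g x) = 0).
Hypothesis f_step : forall x, S x -> single_step_incr (fun y => sign (f (x, y))) c d.

Let f_sign x y : S x -> c <= y <= d ->
  (f (x, y) < 0) = (y < g x) /\ (0 < f (x, y)) = (g x < y).
Proof.
by move=> Sx; apply: single_step_incr_root (f_step Sx) (g_cd Sx) (f_g Sx) y.
Qed.

Lemma measurable_implicit_fun : measurable_fun S g.
Proof.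
apply: measurable_fun_open_superlevel => // s.
have [sc|cs] := ltP s c.
  exists setT; first exact: openT.
  apply/seteqP; split => x [Sx _] //; split => //=.
  by have /andP[+ _] := g_cd Sx; exact: lt_le_trans.
have [ds|sd] := leP d s.
  exists set0; first exact: open0.
  apply/seteqP; split => x [Sx] //= sg; have /andP[_ gd] := g_cd Sx.
  by move: (lt_le_trans sg gd); rewrite ltNge ds.
exists ((fun x => f (x, s)) @^-1` `]-oo, 0[%classic).
  apply: (@open_comp _ R (fun x => f (x, s))); last exact: interval_open.
  move=> x _; apply: (@continuous_comp _ _ _ (fun x => (x, s)) f); last exact: f_cont.
  exact: (cvg_pair cvg_id (cvg_cst s)).
have scd : c <= s <= d by rewrite cs ltW.
by apply/seteqP; split => x [Sx]; rewrite /= in_itv /= (f_sign Sx scd).1.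
Qed.

Lemma integral_Theta_implicit_fun :
  (\int[@leb3 R]_(z in S `*` `[c, d]%classic) (Theta (f z))%:E
   = \int[@leb2 R]_(x in S) (d%:E - (g x)%:E))%E.
Proof.
rewrite -(integral_indic_between (c := c) (d := d) mS measurable_implicit_fun (measurable_cst d))
  => // [|x /g_cd /andP[]//|x /g_cd /andP[]//].
apply: eq_integral => -[x y] /set_mem[/= Sx]; rewrite in_itv /= => ycd.
rewrite indicE /Theta leNgt (f_sign Sx ycd).1 -leNgt.
by case: ifPn => gy; [rewrite mem_set //= gy (andP ycd).2|rewrite memNset //= (negbTE gy)].
Qed.

Lemma integral_Theta_opp_implicit_fun :
  (\int[@leb3 R]_(z in S `*` `[c, d]%classic) (Theta (- f z))%:E
   = \int[@leb2 R]_(x in S) ((g x)%:E - c%:E))%E.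
Proof.
rewrite -(integral_indic_between (c := c) (d := d) mS (measurable_cst c) measurable_implicit_fun)
  => // [|x /g_cd /andP[]//|x /g_cd /andP[]//].
apply: eq_integral => -[x y] /set_mem[/= Sx]; rewrite in_itv /= => ycd.
rewrite indicE /Theta oppr_ge0 leNgt (f_sign Sx ycd).2 -leNgt.
by case: ifPn => yg; [rewrite mem_set //= yg (andP ycd).1|rewrite memNset //= (negbTE yg) andbF].
Qed.

End implicit_function_graph.

Section implicit_function_on_rect.
Variables (R : realType) (f : (R * R) * R -> R) (g : R * R -> R) (c d : R).
Variables (r1 r2 r3 r4 : R).
Hypotheses (f_cont : continuous f) (r12 : r1 <= r2) (r34 : r3 <= r4).
Hypotheses (g_cd : forall x, rect r1 r2 r3 r4 x -> c <= g x <= d)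
  (f_g : forall x, rect r1 r2 r3 r4 x -> f (x, g x) = 0).

Let S := rect r1 r2 r3 r4.
Let area := (r2 - r1) * (r4 - r3).
Let mS : measurable S. Proof. exact: measurable_rect. Qed.
Let S_area : @leb2 R S = area%:E. Proof. exact: leb2_rect. Qed.

Let implicit_fun_integrable :
  measurable_fun S g -> (@leb2 R).-integrable S (EFin \o g).
Proof. by move=> mg; exact: (integrable_between (mu := @leb2 R) mS S_area mg g_cd). Qed.

Let implicit_fun_integral_fin :
  measurable_fun S g -> (\int[@leb2 R]_(x in S) (g x)%:E \is a fin_num)%E.
Proof. by move=> mg; apply: integrable_fin_num => //; exact: implicit_fun_integrable. Qed.

Lemma integral_implicit_fun_incr :
  (forall x, S x -> single_step_incr (fun y => sign (f (x, y))) c d) ->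
  (\int[@leb2 R]_(x in S) (g x)%:E
   = (d * area)%:E - \int[@leb3 R]_(z in S `*` `[c, d]%classic) (Theta (f z))%:E)%E.
Proof.
move=> f_step; have mg := measurable_implicit_fun f_cont mS g_cd f_g f_step.
rewrite (integral_Theta_implicit_fun f_cont mS g_cd f_g f_step).
rewrite (integral_cstB_EFin (mu := @leb2 R) mS S_area) ?implicit_fun_integrable //.
rewrite -(fineK (implicit_fun_integral_fin mg)).
by rewrite -EFinB; congr EFin; ring.
Qed.

Lemma integral_implicit_fun_decr :
  (forall x, S x -> single_step_decr (fun y => sign (f (x, y))) c d) ->
  (\int[@leb2 R]_(x in S) (g x)%:E
   = (c * area)%:E + \int[@leb3 R]_(z in S `*` `[c, d]%classic) (Theta (f z))%:E)%E.
Proof.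
move=> f_step.
have nf_cont : continuous (fun z => - f z) by move=> z; apply: cvgN; exact: f_cont.
have nf_g x : S x -> - f (x, g x) = 0 by move=> Sx; rewrite f_g ?oppr0.
have nf_step x : S x -> single_step_incr (fun y => sign (- f (x, y))) c d.
  by move=> Sx; exact: single_step_decr_opp (f_step x Sx).
have mg := measurable_implicit_fun nf_cont mS g_cd nf_g nf_step.
under [X in _ = _ + X]eq_integral => z _ do rewrite -[f z]opprK.
rewrite (integral_Theta_opp_implicit_fun nf_cont mS g_cd nf_g nf_step).
rewrite (integral_Bcst_EFin (mu := @leb2 R) mS S_area) ?implicit_fun_integrable //.
rewrite -(fineK (implicit_fun_integral_fin mg)).
by rewrite -EFinB -EFinD; congr EFin; ring.
Qed.

End implicit_function_on_rect.

Theorem lemma1 (R : realType) (f : (R * R) * R -> R) (a : R * R) (b : R)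
  (u1 u2 u3 u4 : R) (c d : R) (g : R * R -> R) (rho : int) :
  C1 f ->
  f (a, b) = 0 ->
  'D_((0, 0), 1) f (a, b) != 0 ->
  u1 < u2 -> u3 < u4 -> c < d ->
  rect u1 u2 u3 u4 a ->
  c <= b <= d ->
  (forall x, rect u1 u2 u3 u4 x -> c <= g x <= d) ->
  (forall x, rect u1 u2 u3 u4 x -> f (x, g x) = 0) ->
  ((rho = 1 /\ forall x, rect u1 u2 u3 u4 x ->
                 single_step_incr (fun y => sign (f (x, y))) c d) \/
   (rho = -1 /\ forall x, rect u1 u2 u3 u4 x ->
                 single_step_decr (fun y => sign (f (x, y))) c d)) ->
  forall r1 r2 r3 r4 : R,
    r1 <= r2 -> r3 <= r4 ->
    rect r1 r2 r3 r4 `<=` rect u1 u2 u3 u4 ->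
    (\int[@leb2 R]_(x in rect r1 r2 r3 r4) (g x)%:E
     = ((r2 - r1) * (r4 - r3) * (d ^ ((rho + 1) %/ 2)%Z) * (c ^ ((1 - rho) %/ 2)%Z))%:E
       - (rho%:~R)%:E
         * \int[@leb3 R]_(z in rect r1 r2 r3 r4 `*` `[c, d]%classic) (Theta (f z))%:E)%E.
Proof.
move=> [f_diff _] _ _ _ _ _ _ _ g_cd f_g step r1 r2 r3 r4 r12 r34 RU.
have f_cont : continuous f := fun z => differentiable_continuous (f_diff z).
have gR x : rect r1 r2 r3 r4 x -> c <= g x <= d := fun Rx => g_cd x (RU x Rx).
have fgR x : rect r1 r2 r3 r4 x -> f (x, g x) = 0 := fun Rx => f_g x (RU x Rx).
case: step => [[-> incr] | [-> decr]].
- rewrite (integral_implicit_fun_incr f_cont r12 r34 gR fgR) => [|x Rx]; last exact: incr (RU x Rx).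
  by rewrite /= mul1e mulr1 mulrC.
- rewrite (integral_implicit_fun_decr f_cont r12 r34 gR fgR) => [|x Rx]; last exact: decr (RU x Rx).
  rewrite (_ : ((-1 + 1) %/ 2)%Z = 0) // (_ : ((1 - -1) %/ 2)%Z = 1) // expr0z expr1z.
  by rewrite mulr1 mulrC mulN1e oppeK.
Qed.
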